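(* Let $n\ge2$, $0<k<n$, $l=n-k$. Let $Y_1=[0,1]$, and let each of $Y_2,\dots,Y_k,Z_1,\dots,Z_l$ be either $[0,1]$ or $[-5,5]$; set $Y=Y_1\times\cdots\times Y_k$, $Z=Z_1\times\cdots\times Z_l$, $X=Y\times Z\subseteq\mathbb{R}^n$. Let $f:Y_1\to\mathbb{R}$, $g:Z\to\mathbb{R}$, $h:\mathbb{R}^2\to\mathbb{R}$ be arbitrary functions, and consider the 2-objective problem on $X$ with objectives $f_1(y,z)=f(y_1)$ and $f_2(y,z)=g(z)\,h(f(y_1),g(z))$. Then this problem is not simple. (In particular the ZDT benchmark problems ZDT1–4 and ZDT6, which are of this form, are non-simple for every choice of $n$ and $k$.)
   Context: A problem is a finite set $\mathbf{f}=\{f_1,\dots,f_m\}$ of functions $f_i:\mathbb{R}^n\to\mathbb{R}$ together with a feasible region $X\subseteq\mathbb{R}^n$, to be minimized simultaneously. A subproblem $\mathbf{g}\subseteq\mathbf{f}$ is a subset of these functions (including $\emptyset$ and $\mathbf{f}$), with the same $X$; its evaluation map is $x\mapsto(f_i(x))_{f_i\in\mathbf{g}}\in\mathbb{R}^{|\mathbf{g}|}$. The Pareto set $X^*(\mathbf{g})$ is the set of $x^*\in X$ for which there is no $x\in X$ with $f_i(x)\le f_i(x^* )$ for all $f_i\in\mathbf{g}$ and $f_j(x)<f_j(x^* )$ for some $f_j\in\mathbf{g}$; by convention $X^*(\emptyset)=\emptyset$. A problem $\mathbf{f}$ is simple if every subproblem $\mathbf{g}\subseteq\mathbf{f}$ with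 $k=|\mathbf{g}|$ objectives satisfies: (S1) $X^*(\mathbf{g})$ is homeomorphic to $\Delta^{k-1}=\{t\in[0,1]^k:\sum t_i=1\}$ (with $\Delta^{-1}=\emptyset$); (S2) the evaluation map of $\mathbf{g}$ restricted to $X^*(\mathbf{g})$ is a topological embedding into $\mathbb{R}^k$. All sets carry the subspace topology from Euclidean space. *)

From Stdlib Require Import Reals List.
Import ListNotations.
Open Scope R_scope.

(* A point of R^n is represented as x : nat -> R whose coordinates
   x 0, ..., x (n-1) are the Euclidean coordinates; all sets in R^n used
   below only contain points with x i = 0 for i >= n. *)
Definition pt := nat -> R.

Fixpoint sumR (n : nat) (u : nat -> R) : R :=
  match n with
  | O => 0
  | S m => sumR m u + u m
  end.

Definition dist (n : nat) (x y : pt) : R :=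
  sqrt (sumR n (fun i => (x i - y i) ^ 2)).

Definition continuous_on (n m : nat) (A : pt -> Prop) (phi : pt -> pt) : Prop :=
  forall x, A x -> forall eps, 0 < eps -> exists delta, 0 < delta /\
    forall x', A x' -> dist n x x' < delta -> dist m (phi x) (phi x') < eps.

Definition homeomorphic (n : nat) (A : pt -> Prop) (m : nat) (B : pt -> Prop) : Prop :=
  exists (phi psi : pt -> pt),
    (forall x, A x -> B (phi x)) /\ (forall y, B y -> A (psi y)) /\
    (forall x, A x -> psi (phi x) = x) /\ (forall y, B y -> phi (psi y) = y) /\
    continuous_on n m A phi /\ continuous_on m n B psi.

Definition embedding (n m : nat) (A : pt -> Prop) (e : pt -> pt) : Prop :=
  (forall x x', A x -> A x' -> e x = e x' -> x = x') /\
  continuous_on n m A e /\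
  (forall x, A x -> forall eps, 0 < eps -> exists delta, 0 < delta /\
     forall x', A x' -> dist m (e x) (e x') < delta -> dist n x x' < eps).

Definition simplex (k : nat) (t : pt) : Prop :=
  (forall i, (i < k)%nat -> 0 <= t i <= 1) /\
  (forall i, (k <= i)%nat -> t i = 0) /\
  sumR k t = 1.

(* Pareto set of a (sub)problem G (list of objectives) on X;
   by convention the Pareto set of the empty problem is empty. *)
Definition pareto (G : list (pt -> R)) (X : pt -> Prop) (x : pt) : Prop :=
  G <> [] /\ X x /\
  ~ (exists x', X x' /\ (forall gi, In gi G -> gi x' <= gi x) /\
                        (exists gj, In gj G /\ gj x' < gj x)).

Definition evalmap (G : list (pt -> R)) (x : pt) : pt :=
  fun i => nth i (map (fun gi => gi x) G) 0.

(* Subproblems are the finite sets of objectives of F, given as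
   duplicate-free lists G (every ordering is allowed; reordering is a
   homeomorphism of R^k so this does not matter). *)
Definition simple (n : nat) (F : list (pt -> R)) (X : pt -> Prop) : Prop :=
  forall G, NoDup G -> (forall gi, In gi G -> In gi F) ->
    homeomorphic n (pareto G X) (length G) (simplex (length G)) /\
    embedding n (length G) (pareto G X) (evalmap G).

(* The box X = Y_1 x ... x Y_k x Z_1 x ... x Z_l in R^n: coordinate 0 is in
   [0,1]; coordinate i (1 <= i < n) is in [-5,5] if wide i, else in [0,1]. *)
Definition box (n : nat) (wide : nat -> bool) (x : pt) : Prop :=
  (forall i, (i < n)%nat ->
     if (Nat.eqb i 0 || negb (wide i))%bool then 0 <= x i <= 1 else -5 <= x i <= 5) /\
  (forall i, (n <= i)%nat -> x i = 0).

Definition zpart (n k : nat) (x : pt) : pt :=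
  fun j => if Nat.ltb j (n - k) then x (k + j)%nat else 0.

Definition obj1 (f : R -> R) : pt -> R := fun x => f (x 0%nat).

Definition obj2 (n k : nat) (f : R -> R) (g : pt -> R) (h : R -> R -> R) : pt -> R :=
  fun x => g (zpart n k x) * h (f (x 0%nat)) (g (zpart n k x)).

(* The single-objective subproblem [f1] already fails (S1): Delta^0 is a
   point, so its Pareto set would have to be a single point.  But f1 only
   sees the coordinate y_1, and since n >= 2 the coordinate x_1 ranges over
   at least [0,1] and can be changed freely inside a Pareto-optimal point
   without affecting f1, giving two distinct Pareto-optimal points. *)

From Stdlib Require Import Reals List Lra Lia FunctionalExtensionality.
Import ListNotations.
Open Scope R_scope.

Definition set_coord (x : pt) (i : nat) (v : R) : pt :=
  fun j => if Nat.eqb j i then v else x j.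

Lemma set_coord_eq (x : pt) (i : nat) (v : R) : set_coord x i v i = v.
Proof. unfold set_coord. now rewrite Nat.eqb_refl. Qed.

Lemma simplex1_vertex : simplex 1 (fun i => if Nat.eqb i 0 then 1 else 0).
Proof.
  split; [|split].
  - intros [|i] Hi; simpl; lra.
  - intros [|i] Hi; [lia | reflexivity].
  - simpl. lra.
Qed.

Lemma simplex1_unique (t u : pt) : simplex 1 t -> simplex 1 u -> t = u.
Proof.
  intros [_ [Ht St]] [_ [Hu Su]]. apply functional_extensionality; intros [|i].
  - simpl in St, Su. lra.
  - rewrite Ht, Hu by lia. reflexivity.
Qed.

Lemma homeomorphic_simplex1_inhabited (n : nat) (A : pt -> Prop) :
  homeomorphic n A 1 (simplex 1) -> exists x, A x.
Proof.
  intros [_ [psi [_ [HB _]]]]. eexists. exact (HB _ simplex1_vertex).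
Qed.

Lemma homeomorphic_simplex1_subsingleton (n : nat) (A : pt -> Prop) :
  homeomorphic n A 1 (simplex 1) -> forall x y, A x -> A y -> x = y.
Proof.
  intros [phi [psi [HA [_ [Hpsi _]]]]] x y Ax Ay.
  rewrite <- (Hpsi x Ax), <- (Hpsi y Ay).
  now rewrite (simplex1_unique _ _ (HA x Ax) (HA y Ay)).
Qed.

Lemma pareto_transfer (G : list (pt -> R)) (X : pt -> Prop) (x x' : pt) :
  X x' -> (forall gi, In gi G -> gi x' = gi x) ->
  pareto G X x -> pareto G X x'.
Proof.
  intros Xx' Heq [HG [_ Hopt]]. split; [exact HG | split; [exact Xx' |]].
  intros [y [Xy [Hle [gj [Hgj Hlt]]]]]. apply Hopt.
  exists y. split; [exact Xy | split].
  - intros gi Hgi. rewrite <- Heq by exact Hgi. exact (Hle gi Hgi).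
  - exists gj. rewrite <- Heq by exact Hgj. now split.
Qed.

Lemma box_set_coord (n : nat) (wide : nat -> bool) (x : pt) (i : nat) (v : R) :
  (i < n)%nat -> 0 <= v <= 1 -> box n wide x -> box n wide (set_coord x i v).
Proof.
  intros Hi Hv [Hin Hout]. unfold set_coord. split.
  - intros j Hj. destruct (Nat.eqb_spec j i); [| exact (Hin j Hj)].
    destruct (Nat.eqb j 0 || negb (wide j))%bool; lra.
  - intros j Hj. destruct (Nat.eqb_spec j i); [lia | exact (Hout j Hj)].
Qed.

Lemma obj1_set_coord (f : R -> R) (x : pt) (i : nat) (v : R) :
  i <> 0%nat -> obj1 f (set_coord x i v) = obj1 f x.
Proof.
  intro Hi. unfold obj1, set_coord.
  destruct (Nat.eqb_spec 0 i); [congruence | reflexivity].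
Qed.

Lemma pareto_obj1_set_coord (n : nat) (wide : nat -> bool) (f : R -> R)
    (x : pt) (i : nat) (v : R) :
  (0 < i < n)%nat -> 0 <= v <= 1 ->
  pareto [obj1 f] (box n wide) x -> pareto [obj1 f] (box n wide) (set_coord x i v).
Proof.
  intros Hi Hv Px. apply (pareto_transfer _ _ x).
  - apply box_set_coord; [lia | exact Hv | exact (proj1 (proj2 Px))].
  - intros gi [<- | []]. apply obj1_set_coord. lia.
  - exact Px.
Qed.

Theorem theorem2 (n k : nat) (hn : (2 <= n)%nat) (hk0 : (0 < k)%nat) (hkn : (k < n)%nat)
  (wide : nat -> bool) (f : R -> R) (g : pt -> R) (h : R -> R -> R) :
  ~ simple n [obj1 f; obj2 n k f g h] (box n wide).
Proof.
  intro Hs.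
  destruct (Hs [obj1 f]) as [Hhom _].
  - repeat constructor. intros [].
  - intros gi [<- | []]. now left.
  - destruct (homeomorphic_simplex1_inhabited _ _ Hhom) as [x Px].
    assert (Hi : (0 < 1 < n)%nat) by lia.
    pose proof (pareto_obj1_set_coord n wide f x 1 0 Hi ltac:(lra) Px) as P0.
    pose proof (pareto_obj1_set_coord n wide f x 1 1 Hi ltac:(lra) Px) as P1.
    pose proof (homeomorphic_simplex1_subsingleton _ _ Hhom _ _ P0 P1) as E.
    apply (f_equal (fun y => y 1%nat)) in E.
    rewrite !set_coord_eq in E. lra.
Qed.
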